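(* Let $S_\alpha(Y)=\#\{n\leqslant Y:\ p\mid n\Rightarrow p^\alpha\mid n\}$ (the number of natural numbers $n\leqslant Y$ such that every prime dividing $n$ divides it to exponent at least $\alpha$). Then uniformly for integers $\alpha\geqslant2$ and real $Y\geqslant 2$, $$S_\alpha(Y)\ll\alpha\kappa^\alpha Y^{1/\alpha}\log Y,$$ with an absolute implied constant, where $\kappa=\exp\left(\sum_p\frac{1}{p\log p}\right)$.
   Context: The sum defining $\kappa$ is over all primes. *)

From HB Require Import structures.
From mathcomp Require Import all_boot all_order all_algebra.
From mathcomp Require Import all_classical all_reals all_analysis.
Set Implicit Arguments. Unset Strict Implicit. Unset Printing Implicit Defensive.
Import Order.TTheory GRing.Theory Num.Theory.
Local Open Scope ring_scope.

Definition alpha_full (alpha n : nat) : bool :=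
  all (fun p => (p ^ alpha %| n)%N) (primes n).

Definition S_alpha {R : realType} (alpha : nat) (Y : R) : nat :=
  count (alpha_full alpha) (iota 1 (Num.truncn Y)).

Definition prime_term {R : realType} (k : nat) : R :=
  if prime k then (k%:R * ln (k%:R : R))^-1 else 0.

Definition kappa {R : realType} : R :=
  expR (limn (fun n : nat => \sum_(k < n) (@prime_term R k))).

From mathcomp Require Import all_boot all_order all_algebra.
From mathcomp Require Import all_classical all_reals all_analysis.
From mathcomp Require Import ring lra.
Import Order.TTheory GRing.Theory Num.Theory numFieldNormedType.Exports.

(** Every alpha-full n factors as n = rad(n)^alpha * m with rad m | rad n, so
    the alpha-full n <= N with a given cofactor m correspond to multiples of
    rad m that are at most (N/m)^(1/alpha); summing over m,
      S_alpha(N) <= N^(1/alpha) * sum_(m <= N) m^(-1/alpha) / rad m.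
    This sum is at most the Euler product of the local factors
    1 + (1/p) sum_(b >= 1) p^(-b/alpha) <= 1 + alpha/(p log p) <= exp(alpha/(p log p)),
    using p^(1/alpha) - 1 >= (log p)/alpha; hence S_alpha(N) <= kappa^alpha N^(1/alpha),
    which beats the claim since alpha log Y >= 2 log 2 >= 1.
    The series defining kappa converges by Chebyshev's argument: the primes in
    (N, 2N] divide binomial(2N, N) <= 4^N, so they contribute O(1/log^2 N). *)

Definition rad (n : nat) : nat := \prod_(p <- primes n) p.

Lemma prod_primes_expn_dvd (s : seq nat) e m : uniq s -> all prime s ->
  {in s, forall p, p ^ e %| m} -> (\prod_(p <- s) p) ^ e %| m.
Proof.
elim: s => [|p s IH]; first by rewrite big_nil exp1n dvd1n.
case/andP=> p_notin_s s_uniq /andP[p_pr s_pr] dvd_m.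
have coprime_p_s : coprime p (\prod_(q <- s) q).
  rewrite big_seq; apply: (big_ind (coprime p)) => [|x y cx cy|q q_s]; first exact: coprimen1.
    by rewrite coprimeMr cx cy.
  rewrite prime_coprime // dvdn_prime2 //; last exact: (allP s_pr).
  by apply: contraNneq p_notin_s => ->.
rewrite big_cons expnMn Gauss_dvd ?coprimeXl ?coprimeXr //.
rewrite dvd_m ?mem_head // IH // => q q_s.
by apply: dvd_m; rewrite in_cons q_s orbT.
Qed.

Lemma prod_primes_gt0 (s : seq nat) : all prime s -> 0 < \prod_(p <- s) p.
Proof. by move/allP=> s_pr; rewrite big_seq prodn_cond_gt0 // => p /s_pr/prime_gt0. Qed.

Lemma rad_gt0 n : 0 < rad n.
Proof. exact/prod_primes_gt0/all_prime_primes. Qed.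

Lemma rad_expn_dvd n e m : {in primes n, forall p, p ^ e %| m} -> rad n ^ e %| m.
Proof. exact/prod_primes_expn_dvd/all_prime_primes/primes_uniq. Qed.

Lemma alpha_full_rad_dvd alpha n : alpha_full alpha n -> rad n ^ alpha %| n.
Proof. by move/allP; apply: rad_expn_dvd. Qed.

Lemma rad_dvd_rad r n : 0 < n -> r %| n -> rad r %| rad n.
Proof.
move=> n_gt0 r_dvd_n; rewrite -[rad r]expn1; apply: rad_expn_dvd => p p_r.
have p_n : p \in primes n.
  by move: p_r; rewrite !mem_primes n_gt0 => /and3P[-> _ /dvdn_trans->].
by rewrite expn1 /rad (big_rem p p_n) dvdn_mulr.
Qed.

Definition full_cofactor (alpha n : nat) : nat := n %/ rad n ^ alpha.

Lemma full_cofactorK {alpha n : nat} :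
  alpha_full alpha n -> rad n ^ alpha * full_cofactor alpha n = n.
Proof. by move=> full_n; rewrite mulnC divnK // alpha_full_rad_dvd. Qed.

Lemma count_dvdn_iota d M : 0 < d -> count (dvdn d) (iota 1 M) = M %/ d.
Proof.
move=> d_gt0; elim: M => [|M IH]; first by rewrite div0n.
by rewrite -[M.+1]addn1 iotaD count_cat IH /= addn0 add1n addn1 divnS // addnC.
Qed.

Lemma count_leq_inj {T1 T2 : eqType} (f : T1 -> T2) {P : pred T1} {Q : pred T2}
    {s : seq T1} {t : seq T2} : uniq s ->
  {in [seq x <- s | P x] &, injective f} ->
  {in s, forall x, P x -> (f x \in t) && Q (f x)} ->
  count P s <= count Q t.
Proof.
move=> s_uniq f_inj f_st; rewrite -!size_filter -(size_map f).
apply: uniq_leq_size; first by rewrite map_inj_in_uniq // filter_uniq.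
move=> y /mapP[x]; rewrite mem_filter => /andP[Px xs] ->.
by rewrite mem_filter; case/andP: (f_st x xs Px) => -> ->.
Qed.

Lemma count_fibers {T1 T2 : eqType} {P : pred T1} (f : T1 -> T2)
    {s : seq T1} {t : seq T2} :
  uniq t -> {in s, forall x, P x -> f x \in t} ->
  count P s = \sum_(y <- t) count (fun x => P x && (f x == y)) s.
Proof.
move=> t_uniq; elim: s => [|x s IH] f_t /=; first by rewrite big1.
rewrite big_split /= -IH; last by move=> y ys; apply: f_t; rewrite in_cons ys orbT.
congr (_ + _); case Px: (P x) => /=; last by rewrite big1.
rewrite (bigD1_seq (f x)) ?f_t ?mem_head //= eqxx big1 ?addn0 // => y /negbTE.
by rewrite eq_sym => ->.
Qed.

Lemma bin_mid_leq N : 'C(N.*2, N) <= 2 ^ N.*2.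
Proof.
have N_lt : N < N.*2.+1 by rewrite ltnS -addnn leq_addr.
have -> : 2 = 1 + 1 by [].
by rewrite expnDn (bigD1 (Ordinal N_lt)) //= !exp1n !muln1 leq_addr.
Qed.

Lemma prime_ndvd_fact p N : prime p -> N < p -> ~~ (p %| N`!).
Proof.
move=> p_pr; elim: N => [|N IH] lt_N_p.
  by rewrite fact0 dvdn1; case: p p_pr {lt_N_p} => [|[]].
rewrite factS Euclid_dvdM // negb_or IH ?(ltnW lt_N_p) // andbT.
by apply/negP => /(dvdn_leq (ltn0Sn N)); rewrite leqNgt lt_N_p.
Qed.

Lemma prime_dvd_bin_mid N p : prime p -> N < p <= N.*2 -> p %| 'C(N.*2, N).
Proof.
move=> p_pr /andP[lt_N_p le_p_2N].
have := bin_fact (leq_addr N N); rewrite addnK addnn => fact_eq.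
have : p %| N.*2`! by apply: dvdn_fact; rewrite prime_gt0.
by rewrite -fact_eq Gauss_dvdl // coprimeMr prime_coprime // prime_ndvd_fact.
Qed.

Lemma prod_primes_dvd_bin_mid N :
  \prod_(p <- [seq p <- iota N.+1 N | prime p]) p %| 'C(N.*2, N).
Proof.
rewrite -[X in X %| _]expn1; apply: prod_primes_expn_dvd.
- by rewrite filter_uniq // iota_uniq.
- exact: filter_all.
move=> p; rewrite mem_filter mem_iota expn1 => /andP[p_pr /andP[lo hi]].
by apply: prime_dvd_bin_mid => //; rewrite lo -addnn -ltnS -addSn.
Qed.

Local Open Scope ring_scope.

Section Bounds.
Variable R : realType.

Lemma ln_prod (I : eqType) (s : seq I) (F : I -> R) : {in s, forall i, 0 < F i} ->
  ln (\prod_(i <- s) F i) = \sum_(i <- s) ln (F i).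
Proof.
elim: s => [|i s IH] F_gt0; first by rewrite !big_nil ln1.
have F_gt0_s : {in s, forall j, 0 < F j}.
  by move=> j js; apply: F_gt0; rewrite in_cons js orbT.
rewrite !big_cons lnM ?IH // posrE ?F_gt0 ?mem_head //.
by rewrite big_seq prodr_gt0.
Qed.

Lemma powR_prod (I : Type) (s : seq I) (F : I -> R) a : (forall i, 0 <= F i) ->
  (\prod_(i <- s) F i) `^ a = \prod_(i <- s) F i `^ a.
Proof.
move=> F_ge0; elim: s => [|i s IH]; first by rewrite !big_nil powR1.
by rewrite !big_cons powRM ?IH ?prodr_ge0.
Qed.

Lemma powRXn (x a : R) n : 0 <= x -> (x ^+ n) `^ a = (x `^ a) ^+ n.
Proof.
move=> x_ge0; rewrite -powR_mulrn // -powRrM mulrC powRrM powR_mulrn //.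
exact: powR_ge0.
Qed.

Lemma powRV (x a : R) : 0 <= x -> (x^-1) `^ a = (x `^ a)^-1.
Proof. by move=> x_ge0; rewrite -(powR_inv1 x_ge0) -powRrM mulN1r powRN. Qed.

Lemma ler_powR_invn (x y : R) n : (0 < n)%N -> 0 <= x -> x ^+ n <= y ->
  x <= y `^ n%:R^-1.
Proof.
move=> n_gt0 x_ge0 xn_le_y.
have root : (x ^+ n) `^ n%:R^-1 = x.
  by rewrite -powR_mulrn // -powRrM mulfV ?powRr1 // pnatr_eq0 -lt0n.
rewrite -[X in X <= _]root; apply: ge0_ler_powR => //; rewrite ?nnegrE ?exprn_ge0 //.
exact: le_trans (exprn_ge0 _ x_ge0) xn_le_y.
Qed.

Lemma sum_uniq_le_sumT (I : finType) (s : seq I) (F : I -> R) :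
  uniq s -> (forall i, 0 <= F i) -> \sum_(i <- s) F i <= \sum_i F i.
Proof.
move=> s_uniq F_ge0; rewrite big_uniq // [X in _ <= X](bigID (mem s)) /= lerDl.
exact: sumr_ge0.
Qed.

(** * Convergence of the series defining kappa *)

Lemma half_le_ln2 : 2^-1 <= ln (2 : R).
Proof.
have : ln (1 + - 2^-1) <= - 2^-1 :> R by apply: le_ln1Dx; lra.
have -> : 1 + - 2^-1 = 2^-1 :> R by lra.
by rewrite lnV ?posrE //; lra.
Qed.

Lemma ln2_gt0 : 0 < ln (2 : R).
Proof. by apply: lt_le_trans half_le_ln2; rewrite invr_gt0. Qed.

Lemma sum_ln_primes_between N :
  \sum_(p <- iota N.+1 N | prime p) ln (p%:R : R) <= N.*2%:R * ln 2.
Proof.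
set P := \prod_(p <- [seq p <- iota N.+1 N | prime p]) p.
have P_gt0 : (0 < P)%N by apply/prod_primes_gt0/filter_all.
have P_le : (P <= 2 ^ N.*2)%N.
  have bin_gt0 : (0 < 'C(N.*2, N))%N by rewrite bin_gt0 -addnn leq_addr.
  exact: leq_trans (dvdn_leq bin_gt0 (prod_primes_dvd_bin_mid N)) (bin_mid_leq N).
rewrite -big_filter -ln_prod; last first.
  by move=> p; rewrite mem_filter ltr0n => /andP[/prime_gt0].
rewrite -natr_prod -/P mulr_natl -lnXn // -natrX.
by rewrite ler_ln ?posrE ?ltr0n ?expn_gt0 // ler_nat.
Qed.

Lemma prime_term_ge0 k : 0 <= prime_term k :> R.
Proof.
rewrite /prime_term; case: ifP => // k_pr.
by rewrite invr_ge0 mulr_ge0 // ln_ge0 // ler1n prime_gt0.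
Qed.

Lemma prime_term_le p N : prime p -> (1 < N < p)%N ->
  prime_term p <= ln (p%:R : R) / (N%:R * ln N%:R ^+ 2).
Proof.
move=> p_pr /andP[N_gt1 N_lt_p]; rewrite /prime_term p_pr.
have N_gt0 : 0 < N%:R :> R by rewrite ltr0n ltnW.
have N_le_p : N%:R <= p%:R :> R by rewrite ler_nat ltnW.
have lnN_gt0 : 0 < ln (N%:R : R) by rewrite ln_gt0 // ltr1n.
have lnN_le : ln (N%:R : R) <= ln p%:R by rewrite ler_ln ?posrE // (lt_le_trans N_gt0).
have p_gt0 : 0 < p%:R :> R := lt_le_trans N_gt0 N_le_p.
have lnp_gt0 : 0 < ln (p%:R : R) := lt_le_trans lnN_gt0 lnN_le.
have -> : (p%:R * ln (p%:R : R))^-1 = ln p%:R / (p%:R * ln p%:R ^+ 2).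
  by field; rewrite ?gt_eqF.
rewrite ler_pM2l // lef_pV2 ?posrE ?mulr_gt0 ?exprn_gt0 //.
by apply: ler_pM => //; nra.
Qed.

Lemma sum_prime_term_between N : (1 < N)%N ->
  \sum_(p <- iota N.+1 N) prime_term p <= 2 * ln (2 : R) / ln N%:R ^+ 2.
Proof.
move=> N_gt1.
have N_gt0 : 0 < N%:R :> R by rewrite ltr0n ltnW.
have lnN_gt0 : 0 < ln (N%:R : R) by rewrite ln_gt0 // ltr1n.
rewrite (bigID prime) /= [X in _ + X]big1 ?addr0; last first.
  by move=> p /negbTE p_npr; rewrite /prime_term p_npr.
apply: le_trans (_ : _ <= \sum_(p <- iota N.+1 N | prime p)
                           ln (p%:R : R) / (N%:R * ln N%:R ^+ 2)) _.
  rewrite big_seq_cond [X in _ <= X]big_seq_cond; apply: ler_sum => p.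
  by rewrite mem_iota => /andP[/andP[N_lt_p _] p_pr]; rewrite prime_term_le // N_gt1.
rewrite -mulr_suml; apply: le_trans (ler_wpM2r _ (sum_ln_primes_between N)) _.
  by rewrite invr_ge0 mulr_ge0 ?exprn_ge0 // ltW.
rewrite -addnn natrD -mulr2n -mulr_natl le_eqVlt; apply/predU1P; left.
by field; rewrite mulr1 !gt_eqF.
Qed.

Lemma sum_prime_term_dyadic_le K : (0 < K)%N ->
  \sum_(p <- iota (2 ^ K).+1 (2 ^ K)) prime_term p <= 8 / K%:R - 8 / K.+1%:R :> R.
Proof.
move=> K_gt0.
have two_pow_gt1 : (1 < 2 ^ K)%N by rewrite -{1}(expn0 2) ltn_exp2l.
apply: le_trans (sum_prime_term_between _ two_pow_gt1) _.
rewrite natrX lnXn // -[ln _ *+ K]mulr_natr -[K.+1%:R]natr1.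
have := half_le_ln2; have := ln2_gt0; set l := ln _ => l_gt0 l_ge.
have k_ge1 : 1 <= K%:R :> R by rewrite ler1n.
set k := K%:R in k_ge1 *; rewrite -subr_ge0.
have -> : 8 / k - 8 / (k + 1) - 2 * l / (l * k) ^+ 2
          = (8 * l * k - 2 * k - 2) / (l * k ^+ 2 * (k + 1)).
  by field; rewrite !gt_eqF //; lra.
by rewrite divr_ge0 ?mulr_ge0 //; nra.
Qed.

Definition prime_term_sum n : R := \sum_(k < n) prime_term k.

Lemma prime_term_sum_double N :
  prime_term_sum N.*2.+1 = prime_term_sum N.+1 + \sum_(p <- iota N.+1 N) prime_term p.
Proof.
rewrite /prime_term_sum -!(big_mkord xpredT).
rewrite (@big_cat_nat _ _ _ N.+1) //=; last by rewrite ltnS -addnn leq_addr.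
by rewrite /index_iota subSS -addnn addnK.
Qed.

Lemma nondecreasing_prime_term_sum :
  {homo prime_term_sum : n m / (n <= m)%N >-> n <= m}.
Proof.
apply/nondecreasing_seqP => n.
by rewrite /prime_term_sum big_ord_recr /= lerDl prime_term_ge0.
Qed.

Lemma prime_term_sum_pow2_le K : (0 < K)%N -> prime_term_sum (2 ^ K).+1 <= 9 - 8 / K%:R.
Proof.
elim: K => [//|[|K] IH _].
  rewrite /prime_term_sum !big_ord_recr big_ord0 /= /prime_term /=.
  have := half_le_ln2; have := ln2_gt0; set l := ln _ => l_gt0 l_ge.
  have : (2%:R * l)^-1 <= 1 by rewrite invf_le1 ?mulr_gt0 //; lra.
  lra.
rewrite expnS mul2n prime_term_sum_double.
apply: le_trans (lerD (IH isT) (sum_prime_term_dyadic_le K.+1 isT)) _.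
by rewrite addrA subrK.
Qed.

Lemma prime_term_sum_le_lim n : prime_term_sum n <= limn prime_term_sum.
Proof.
have bounded : has_ubound (range prime_term_sum).
  exists 9 => _ [m _ <-].
  have m_le : (m <= (2 ^ m.+1).+1)%N.
    by apply: leqW; apply: ltnW; apply: ltnW; exact: ltn_expl.
  apply: le_trans (nondecreasing_prime_term_sum _ _ m_le) _.
  apply: le_trans (prime_term_sum_pow2_le _ (ltn0Sn m)) _.
  by rewrite gerBl divr_ge0.
apply: nondecreasing_cvgn_le nondecreasing_prime_term_sum _ n.
exact: cvgP (nondecreasing_cvgn nondecreasing_prime_term_sum bounded).
Qed.

Lemma prod_expR_prime_term_le_kappa alpha n :
  \prod_(p < n) expR (alpha%:R * prime_term p) <= kappa ^+ alpha :> R.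
Proof.
rewrite -expR_sum -mulr_sumr /kappa -expRM_natl ler_expR ler_wpM2l //.
exact: prime_term_sum_le_lim.
Qed.

(** * The Euler product *)

(* Expanding the product chooses an exponent b_p for each p <= N; for r <= N
   the choice b_p = logn p r is admissible and determines r. *)
Lemma sum_prod_logn_le N (H : nat -> nat -> R) : (forall p b, 0 <= H p b) ->
  \sum_(r <- iota 1 N) \prod_(p < N.+1) H p (logn p r)
    <= \prod_(p < N.+1) \sum_(b < N.+1) H p b.
Proof.
move=> H_ge0; rewrite (bigA_distr_bigA (fun p b : 'I_N.+1 => H p b)) /=.
have logn_lt r p : r \in iota 1 N -> (logn p r < N.+1)%N.
  rewrite mem_iota add1n => /andP[r_gt0 r_lt].
  exact: ltn_trans (ltn_logl p r_gt0) r_lt.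
pose exps r : {ffun 'I_N.+1 -> 'I_N.+1} := [ffun p : 'I_N.+1 => inord (logn p r)].
have exps_inj : {in iota 1 N &, injective exps}.
  move=> r r' r_in r'_in exps_eq; apply: eqn_from_log => [||p].
  - by move: r_in; rewrite mem_iota => /andP[].
  - by move: r'_in; rewrite mem_iota => /andP[].
  have [p_lt|p_ge] := ltnP p N.+1.
    have := congr1 (fun f : {ffun 'I_N.+1 -> 'I_N.+1} => val (f (Ordinal p_lt))) exps_eq.
    by rewrite /= !ffunE /= !inordK ?logn_lt.
  have logn0 x : x \in iota 1 N -> logn p x = 0%N.
    rewrite mem_iota add1n => /andP[_ x_le]; apply/eqP; rewrite -leqn0 leqNgt.
    rewrite logn_gt0 mem_primes; apply/negP => /and3P[_ x_gt0 /(dvdn_leq x_gt0)].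
    by rewrite leqNgt (leq_trans x_le p_ge).
  by rewrite !logn0.
rewrite (eq_big_seq (fun r => \prod_(p < N.+1) H p (exps r p))); last first.
  by move=> r r_in; apply: eq_bigr => p _; rewrite ffunE inordK ?logn_lt.
rewrite -(big_map exps xpredT (fun f => \prod_(p < N.+1) H p (f p))).
apply: sum_uniq_le_sumT; last by move=> f; apply: prodr_ge0.
by rewrite map_inj_in_uniq ?iota_uniq.
Qed.

(* The p-factor of [r ^- a / rad r] when logn p r = b; the [else 0] branch is
   a junk value, as logn p r = 0 for every non-prime p. *)
Definition local_weight (a : R) (p b : nat) : R :=
  if b == 0%N then 1 else if prime p then (p%:R `^ a) ^- b / p%:R else 0.

Lemma local_weight_ge0 a p b : 0 <= local_weight a p b.
Proof. by rewrite /local_weight; case: eqP => // _; case: prime. Qed.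

Lemma prod_ord_primes (F : nat -> R) r N : (0 < r <= N)%N ->
  (forall p, p \notin primes r -> F p = 1) ->
  \prod_(p < N.+1) F p = \prod_(p <- primes r) F p.
Proof.
move=> /andP[r_gt0 r_le_N] F1.
rewrite -(big_mkord xpredT) (bigID (mem (primes r))) /= [X in _ * X]big1 ?mulr1.
- rewrite -big_filter; apply/perm_big/uniq_perm.
  + exact/filter_uniq/iota_uniq.
  + exact: primes_uniq.
  move=> p; rewrite mem_filter mem_iota andb_idr // => p_r; rewrite ltnS.
  move: p_r; rewrite mem_primes => /and3P[_ _ /(dvdn_leq r_gt0) p_le_r].
  exact: leq_trans r_le_N.
- by move=> p /F1.
Qed.

Lemma prod_local_weight_logn a N r : (0 < r <= N)%N ->
  \prod_(p < N.+1) local_weight a p (logn p r) = (r%:R `^ a)^-1 / (rad r)%:R.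
Proof.
move=> r_range; have /andP[r_gt0 _] := r_range.
rewrite (prod_ord_primes (fun p => local_weight a p (logn p r)) _ _ r_range); last first.
  move=> p p_r; rewrite /local_weight (_ : logn p r = 0%N) //.
  by apply/eqP; rewrite -leqn0 leqNgt logn_gt0.
have r_decomp : r%:R = \prod_(p <- primes r) p%:R ^+ logn p r :> R.
  rewrite {1}(prod_prime_decomp r_gt0) prime_decompE big_map natr_prod.
  by apply: eq_bigr => p _; rewrite natrX.
rewrite r_decomp powR_prod => [|p]; last exact: exprn_ge0.
rewrite /rad natr_prod -!prodfV -big_split /=; apply: eq_big_seq => p p_r.
have p_pr : prime p by move: p_r; rewrite mem_primes => /andP[].
by rewrite /local_weight eqn0Ngt logn_gt0 p_r /= p_pr powRXn.
Qed.

Lemma sum_local_weight_le a N p : 0 < a ->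
  \sum_(b < N.+1) local_weight a p b <= expR (a^-1 * prime_term p).
Proof.
move=> a_gt0; rewrite big_ord_recl /local_weight /= /prime_term.
have [p_pr|_] := boolP (prime p); last by rewrite big1 ?addr0 ?mulr0 ?expR0.
apply: le_trans (expR_ge1Dx _); rewrite lerD2l.
have p_gt1 : 1 < p%:R :> R by rewrite ltr1n prime_gt1.
have lnp_gt0 : 0 < ln (p%:R : R) by rewrite ln_gt0.
set Q := p%:R `^ a.
have Q_ge : 1 + a * ln p%:R <= Q by rewrite /Q /powR gt_eqF ?expR_ge1Dx //; lra.
have aln_gt0 : 0 < a * ln (p%:R : R) by rewrite mulr_gt0.
have Q_gt1 : 1 < Q by lra.
have Q_gt0 : 0 < Q by lra.
have geom : \sum_(i < N) (Q ^+ bump 0 i)^-1 <= (a * ln p%:R)^-1.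
  have QV_lt1 : `|Q^-1| < 1 by rewrite ger0_norm ?invr_ge0 ?ltW // invf_lt1.
  have -> : \sum_(i < N) (Q ^+ bump 0 i)^-1 = series (geometric Q^-1 Q^-1) N.
    by rewrite /series /= big_mkord; apply: eq_bigr => i _; rewrite -exprVn exprS.
  have QV_gt0 : 0 < Q^-1 by rewrite invr_gt0.
  apply: le_trans (geometric_le_lim N (ltW QV_gt0) QV_gt0 QV_lt1) _.
  have -> : Q^-1 / (1 - Q^-1) = (Q - 1)^-1.
    by field; rewrite ?gt_eqF ?subr_gt0.
  by rewrite lef_pV2 ?posrE ?subr_gt0 //; lra.
rewrite -mulr_suml; apply: le_trans (ler_wpM2r _ geom) _.
  by rewrite invr_ge0 ler0n.
by rewrite !invfM -mulrA [(ln _)^-1 * _]mulrC.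
Qed.

Lemma sum_inv_powR_rad_le_kappa alpha N : (0 < alpha)%N ->
  \sum_(r <- iota 1 N) (r%:R `^ alpha%:R^-1)^-1 / (rad r)%:R <= kappa ^+ alpha :> R.
Proof.
move=> alpha_gt0; have a_gt0 : 0 < alpha%:R^-1 :> R by rewrite invr_gt0 ltr0n.
rewrite (eq_big_seq (fun r => \prod_(p < N.+1) local_weight alpha%:R^-1 p (logn p r))).
  apply: le_trans (sum_prod_logn_le N _ (local_weight_ge0 _)) _.
  apply: le_trans (prod_expR_prime_term_le_kappa alpha N.+1).
  apply: ler_prod => p _; rewrite sumr_ge0 => [|b _]; last exact: local_weight_ge0.
  by rewrite -[X in expR (X * _)]invrK sum_local_weight_le.
by move=> r; rewrite mem_iota add1n ltnS => r_range; rewrite prod_local_weight_logn.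
Qed.

(** * Counting alpha-full numbers *)

Lemma count_full_fiber_le alpha N r : (0 < alpha)%N -> (0 < r)%N ->
  (count (fun n => alpha_full alpha n && (full_cofactor alpha n == r)) (iota 1 N))%:R
    <= (N%:R / r%:R) `^ alpha%:R^-1 / (rad r)%:R :> R.
Proof.
move=> alpha_gt0 r_gt0; set W := (N%:R / r%:R) `^ _.
have W_ge0 : 0 <= W by apply: powR_ge0.
set M := Num.truncn W.
have count_le : (count (fun n => alpha_full alpha n && (full_cofactor alpha n == r))
                   (iota 1 N) <= count (dvdn (rad r)) (iota 1 M))%N.
  apply: (count_leq_inj rad (iota_uniq 1 N)).
    move=> x y; rewrite !mem_filter => /andP[/andP[x_full /eqP x_r] _].
    move=> /andP[/andP[y_full /eqP y_r] _] rad_eq.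
    by rewrite -(full_cofactorK x_full) -(full_cofactorK y_full) x_r y_r rad_eq.
  move=> x; rewrite mem_iota add1n ltnS => /andP[x_gt0 x_le_N] /andP[x_full /eqP x_r].
  have x_eq := full_cofactorK x_full; rewrite x_r in x_eq.
  rewrite mem_iota rad_gt0 add1n ltnS truncn_ge_nat //= rad_dvd_rad //; last first.
    by rewrite -x_eq dvdn_mull.
  rewrite andbT; apply: ler_powR_invn; rewrite ?ler0n //.
  by rewrite ler_pdivlMr ?ltr0n // -natrX -natrM ler_nat x_eq.
rewrite ler_pdivlMr ?ltr0n ?rad_gt0 //; apply: le_trans (_ : M%:R <= W); last first.
  by rewrite truncn_le.
rewrite -natrM ler_nat; apply: leq_trans (leq_mul count_le (leqnn _)) _.
by rewrite count_dvdn_iota ?rad_gt0 // leq_trunc_div.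
Qed.

Lemma count_full_le_sum alpha N : (0 < alpha)%N ->
  (count (alpha_full alpha) (iota 1 N))%:R
    <= \sum_(r <- iota 1 N) (N%:R / r%:R) `^ alpha%:R^-1 / (rad r)%:R :> R.
Proof.
move=> alpha_gt0.
rewrite (count_fibers (full_cofactor alpha) (iota_uniq 1 N)); last first.
  move=> x; rewrite !mem_iota => /andP[x_gt0 x_lt] x_full.
  have x_eq := full_cofactorK x_full.
  rewrite (leq_ltn_trans (leq_div _ _) x_lt) andbT lt0n.
  by apply: contraTneq x_gt0 => cofactor0; rewrite -x_eq cofactor0 muln0.
rewrite natr_sum big_seq [X in _ <= X]big_seq; apply: ler_sum => r.
by rewrite mem_iota => /andP[r_gt0 _]; apply: count_full_fiber_le.
Qed.

Lemma S_alpha_le alpha Y : (0 < alpha)%N -> 0 <= Y ->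
  (S_alpha alpha Y)%:R <= kappa ^+ alpha * Y `^ alpha%:R^-1 :> R.
Proof.
move=> alpha_gt0 Y_ge0; rewrite /S_alpha; set N := Num.truncn Y.
apply: le_trans (count_full_le_sum alpha N alpha_gt0) _.
have -> : \sum_(r <- iota 1 N) ((N%:R : R) / r%:R) `^ alpha%:R^-1 / (rad r)%:R
    = N%:R `^ alpha%:R^-1 * \sum_(r <- iota 1 N) (r%:R `^ alpha%:R^-1)^-1 / (rad r)%:R.
  rewrite mulr_sumr; apply: eq_bigr => r _.
  by rewrite powRM ?invr_ge0 // powRV // mulrA.
rewrite mulrC; apply: ler_pM.
- by apply: sumr_ge0 => r _; rewrite divr_ge0 ?invr_ge0 ?powR_ge0.
- exact: powR_ge0.
- exact: sum_inv_powR_rad_le_kappa.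
- by rewrite ge0_ler_powR ?invr_ge0 ?nnegrE ?truncn_le.
Qed.

End Bounds.

Theorem lemma5 (R : realType) :
  exists C : R, 0 < C /\
    forall (alpha : nat) (Y : R), (2 <= alpha)%N -> 2 <= Y ->
      (S_alpha alpha Y)%:R <=
        C * alpha%:R * (kappa ^+ alpha) * (Y `^ (alpha%:R^-1)) * ln Y.
Proof.
exists 1; split => // alpha Y alpha_ge2 Y_ge2.
have alpha_gt0 : (0 < alpha)%N by apply: leq_trans alpha_ge2.
have Y_ge0 : 0 <= Y by lra.
apply: le_trans (S_alpha_le R alpha Y alpha_gt0 Y_ge0) _.
have alpha_lnY_ge1 : 1 <= alpha%:R * ln Y.
  have := half_le_ln2 R; have : ln 2 <= ln Y by rewrite ler_ln ?posrE //; lra.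
  have : 2 <= alpha%:R :> R by rewrite ler_nat.
  nra.
have -> : 1 * alpha%:R * kappa ^+ alpha * Y `^ alpha%:R^-1 * ln Y
    = kappa ^+ alpha * Y `^ alpha%:R^-1 * (alpha%:R * ln Y) by ring.
by rewrite ler_peMr // mulr_ge0 ?exprn_ge0 ?powR_ge0 ?expR_ge0.
Qed.
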